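(* Let $A,B$ be abstract state spaces and let $\omega\in A\otimes_{\max}B$ be a bipartite state. Then $\omega$ is steering for its $B$-marginal $\omega^B$ if and only if the restriction $\hat\omega:[0,u_A]\to[0,\omega^B]$ is a strong quotient map of ordered sets.
   Context: An abstract state space is a pair $(A,u_A)$ where $A$ is a finite-dimensional real vector space with a closed, pointed, generating convex cone $A_+$, and $u_A$ is an interior point of the dual cone $A^*_+$. For $x\le y$ in an ordered vector space, $[x,y]=\{z: x\le z\le y\}$; thus $[0,u_A]\subseteq A^*$ is the set of effects. An observable on $A$ is a finite family of effects summing to $u_A$. $A\otimes_{\max}B$ is the space of bilinear forms on $A^*\times B^*$ nonnegative on $A^*_+\times B^*_+$ (every bipartite composite state lies in it); a state is such a form with $\omega(u_A,u_B)=1$; $\hat\omega:A^*\to B$ is $\hat\omega(a)(b)=\omega(a,b)$, and $\omega^B=\hat\omega(u_A)$. An ensemble for $\beta\in B_+$ is a finite family $\beta_i\in B_+$ with $\sum_i\beta_i=\beta$. $\omega$ is steering for its $B$-marginal if for every ensemble $\{\beta_i\}$ for $\omega^B$ there is an observable $\{x_i\}$ on $A$ with $\hat\omega(x_i)=\beta_i$ for all $i$. For partially ordered sets $X,Y$, an order-preserving surjection $p:X\to Y$ is a strong quotient map if every finite chain $y_1\le y_2\le\cdots\le y_n$ in $Y$ is the image of some chain $x_1\le x_2\le\cdots\le x_n$ in $X$, i.e., $y_i=p(x_i)$ for all $i$. *)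

From HB Require Import structures.
From mathcomp Require Import all_boot all_order all_algebra.
From mathcomp Require Import all_classical all_reals all_analysis.
Set Implicit Arguments. Unset Strict Implicit. Unset Printing Implicit Defensive.
Import Order.TTheory GRing.Theory Num.Theory.
Import numFieldNormedType.Exports.
Local Open Scope ring_scope.
Local Open Scope classical_set_scope.

(* Finite-dimensional real vector spaces are modelled as row spaces 'rV[R]_n
   (every n-dimensional real space is isomorphic to one).  The dual space A^*
   is identified with 'rV[R]_n via the canonical pairing below. *)
Definition pairing (R : realType) (n : nat) (f x : 'rV[R]_n) : R :=
  (f *m x^T) 0 0.

Definition convex_cone (R : realType) (n : nat) (K : set 'rV[R]_n) : Prop :=
  K 0 /\ (forall x y, K x -> K y -> K (x + y)) /\
  (forall (t : R) x, 0 <= t -> K x -> K (t *: x)).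

Definition pointed_cone (R : realType) (n : nat) (K : set 'rV[R]_n) : Prop :=
  forall x, K x -> K (- x) -> x = 0.

Definition generating_cone (R : realType) (n : nat) (K : set 'rV[R]_n) : Prop :=
  forall x, exists y z, K y /\ K z /\ x = y - z.

Definition dual_cone (R : realType) (n : nat) (K : set 'rV[R]_n) : set 'rV[R]_n :=
  [set f | forall x, K x -> 0 <= pairing f x].

Definition abstract_state_space (R : realType) (n : nat)
  (Apos : set 'rV[R]_n) (u : 'rV[R]_n) : Prop :=
  [/\ convex_cone Apos, closed Apos, pointed_cone Apos, generating_cone Apos
    & interior (dual_cone Apos) u].

Definition ord_le (R : realType) (n : nat) (K : set 'rV[R]_n) (x y : 'rV[R]_n) : Prop :=
  K (y - x).

Definition ord_interval (R : realType) (n : nat) (K : set 'rV[R]_n) (x y : 'rV[R]_n)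
  : set 'rV[R]_n := [set z | ord_le K x z /\ ord_le K z y].

(* Bilinear forms on A^* x B^* are represented by matrices W : 'M_(n,m):
   omega(a, b) = a W b^T.  *)
Definition bform (R : realType) (n m : nat) (W : 'M[R]_(n, m))
  (a : 'rV[R]_n) (b : 'rV[R]_m) : R := (a *m W *m b^T) 0 0.

(* omega-hat : A^* -> B, omega-hat(a)(b) = omega(a,b), i.e. a W *)
Definition omega_hat (R : realType) (n m : nat) (W : 'M[R]_(n, m))
  (a : 'rV[R]_n) : 'rV[R]_m := a *m W.

Definition in_max_tensor (R : realType) (n m : nat)
  (Apos : set 'rV[R]_n) (Bpos : set 'rV[R]_m) (W : 'M[R]_(n, m)) : Prop :=
  forall a b, dual_cone Apos a -> dual_cone Bpos b -> 0 <= bform W a b.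

Definition bipartite_state (R : realType) (n m : nat)
  (Apos : set 'rV[R]_n) (uA : 'rV[R]_n) (Bpos : set 'rV[R]_m) (uB : 'rV[R]_m)
  (W : 'M[R]_(n, m)) : Prop :=
  in_max_tensor Apos Bpos W /\ bform W uA uB = 1.

Definition marginalB (R : realType) (n m : nat) (W : 'M[R]_(n, m)) (uA : 'rV[R]_n)
  : 'rV[R]_m := omega_hat W uA.

Definition effects (R : realType) (n : nat) (Apos : set 'rV[R]_n) (uA : 'rV[R]_n)
  : set 'rV[R]_n := ord_interval (dual_cone Apos) 0 uA.

Definition observable (R : realType) (n : nat) (Apos : set 'rV[R]_n) (uA : 'rV[R]_n)
  (k : nat) (x : 'I_k -> 'rV[R]_n) : Prop :=
  (forall i, effects Apos uA (x i)) /\ \sum_(i < k) x i = uA.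

Definition ensemble (R : realType) (m : nat) (Bpos : set 'rV[R]_m) (beta : 'rV[R]_m)
  (k : nat) (b : 'I_k -> 'rV[R]_m) : Prop :=
  (forall i, Bpos (b i)) /\ \sum_(i < k) b i = beta.

Definition steering (R : realType) (n m : nat)
  (Apos : set 'rV[R]_n) (uA : 'rV[R]_n) (Bpos : set 'rV[R]_m)
  (W : 'M[R]_(n, m)) : Prop :=
  forall (k : nat) (b : 'I_k -> 'rV[R]_m), ensemble Bpos (marginalB W uA) b ->
  exists x : 'I_k -> 'rV[R]_n, observable Apos uA x /\
    forall i, omega_hat W (x i) = b i.

Definition strong_quotient_map (X Y : Type) (SX : set X) (leX : X -> X -> Prop)
  (SY : set Y) (leY : Y -> Y -> Prop) (p : X -> Y) : Prop :=
  [/\ (forall x, SX x -> SY (p x)),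
      (forall x x', SX x -> SX x' -> leX x x' -> leY (p x) (p x')),
      (forall y, SY y -> exists2 x, SX x & p x = y)
    & (forall (k : nat) (y : 'I_k -> Y),
        (forall i, SY (y i)) ->
        (forall (i j : 'I_k), (i <= j)%N -> leY (y i) (y j)) ->
        exists x : 'I_k -> X, [/\ forall i, SX (x i),
          (forall (i j : 'I_k), (i <= j)%N -> leX (x i) (x j))
          & forall i, p (x i) = y i])].

From HB Require Import structures.
From mathcomp Require Import all_boot all_order all_algebra.
From mathcomp Require Import all_classical all_reals all_analysis.
From mathcomp Require Import ring lra zify.
Import Order.TTheory GRing.Theory Num.Theory.
Import numFieldNormedType.Exports.
Set Implicit Arguments. Unset Strict Implicit. Unset Printing Implicit Defensive.
Local Open Scope ring_scope.
Local Open Scope classical_set_scope.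

(* Steering and chain lifting encode the same data.  An ensemble
   b_0, ..., b_k for w^B is the sequence of increments of the chain of partial
   sums 0 <= b_0 <= b_0 + b_1 <= ... <= w^B in [0, w^B], and an observable is
   the sequence of increments of a chain of effects from 0 to u_A; as w-hat is
   linear, it commutes with taking increments and partial sums, so lifting one
   kind of chain is lifting the other.  The analytic input is positivity of
   w-hat: for a in A^*_+, w-hat(a) is nonnegative on B^*_+, hence lies in B_+
   because a closed convex cone is its own bidual (shown with a nearest-point
   argument).  The normalisation w(u_A, u_B) = 1 rules out the empty ensemble. *)

Lemma ler0_of_quadratic_bound (R : realFieldType) (a c : R) :
  (forall t, 0 < t -> t < 1 -> 2 * t * a <= t ^+ 2 * c) -> a <= 0.
Proof.
move=> H; rewrite leNgt; apply/negP => a_gt0.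
have d_gt0 : 0 < `|c| + 1 + a by rewrite addr_gt0 // ltr_wpDl.
(* at this [t], the bound gives [2 a <= t * |c| < a] *)
pose t := a / (`|c| + 1 + a).
have tE : t * (`|c| + 1 + a) = a by rewrite /t mulfVK // gt_eqF.
have t_gt0 : 0 < t by rewrite divr_gt0.
have t_lt1 : t < 1 by rewrite ltr_pdivrMr // mul1r; have := normr_ge0 c; lra.
have tc : t * c <= t * `|c| by rewrite ler_pM2l // ler_norm.
have := H t t_gt0 t_lt1; rewrite expr2; nra.
Qed.

Section Pairing.
Variables (R : realType) (n : nat).
Implicit Types (a b c v : 'rV[R]_n).

Lemma pairingE a b : pairing a b = \sum_i a 0 i * b 0 i.
Proof. by rewrite /pairing !mxE; apply: eq_bigr => i _; rewrite mxE. Qed.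

Lemma pairingC a b : pairing a b = pairing b a.
Proof. by rewrite !pairingE; apply: eq_bigr => i _; rewrite mulrC. Qed.

Lemma pairingDl a b c : pairing (a + b) c = pairing a c + pairing b c.
Proof. by rewrite /pairing mulmxDl mxE. Qed.

Lemma pairingZl (t : R) a b : pairing (t *: a) b = t * pairing a b.
Proof. by rewrite /pairing -scalemxAl mxE. Qed.

Lemma pairing0l b : pairing 0 b = 0.
Proof. by rewrite /pairing mul0mx mxE. Qed.

Lemma pairingNl a b : pairing (- a) b = - pairing a b.
Proof. by rewrite -scaleN1r pairingZl mulN1r. Qed.

Lemma pairingDr a b c : pairing a (b + c) = pairing a b + pairing a c.
Proof. by rewrite pairingC pairingDl !(pairingC _ a). Qed.

Lemma pairingZr (t : R) a b : pairing a (t *: b) = t * pairing a b.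
Proof. by rewrite pairingC pairingZl pairingC. Qed.

Lemma pairing_expand a b (t : R) :
  pairing (a + t *: b) (a + t *: b) =
  pairing a a + 2 * t * pairing a b + t ^+ 2 * pairing b b.
Proof.
rewrite pairingDl !pairingDr !pairingZl !pairingZr (pairingC b a).
by rewrite expr2; ring.
Qed.

Lemma pairing_self_ge0 v : 0 <= pairing v v.
Proof. by rewrite pairingE; apply: sumr_ge0 => i _; exact: sqr_ge0. Qed.

Lemma pairing_self_eq0 v : pairing v v = 0 -> v = 0.
Proof.
rewrite pairingE => /eqP; rewrite psumr_eq0 => [/allP H|i _]; last exact: sqr_ge0.
apply/rowP => i; rewrite mxE; have := H i (mem_index_enum i).
by rewrite implyTb mulf_eq0 orbb => /eqP.
Qed.

Lemma coord_le_pairing v i : `|v 0 i| <= 1 + pairing v v.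
Proof.
have sq_le : v 0 i * v 0 i <= pairing v v.
  rewrite pairingE (bigD1 i) //= lerDl.
  by apply: sumr_ge0 => j _; exact: sqr_ge0.
have sq_norm : `|v 0 i| * `|v 0 i| = v 0 i * v 0 i by rewrite -normrM ger0_norm ?sqr_ge0.
have [le1|gt1] := lerP `|v 0 i| 1; first by have := pairing_self_ge0 v; lra.
nra.
Qed.

Lemma pairing_self_continuous : continuous (fun v => pairing v v).
Proof.
have -> : (fun v => pairing v v) = fun v => \sum_i v 0 i * v 0 i.
  by apply/funext => v; rewrite pairingE.
apply: continuous_big => [|i _]; first exact: add_continuous.
by move=> v; apply: continuousM; exact: coord_continuous.
Qed.

Lemma dual_cone_convex (K : set 'rV[R]_n) : convex_cone (dual_cone K).
Proof.
split; first by move=> x _; rewrite pairing0l.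
split; first by move=> f g Hf Hg x Kx; rewrite pairingDl addr_ge0 ?Hf ?Hg.
by move=> t f t0 Hf x Kx; rewrite pairingZl mulr_ge0 ?Hf.
Qed.

End Pairing.

Section NearestPoint.
Variables (R : realType) (n : nat) (K : set 'rV[R]_n) (y : 'rV[R]_n).

Local Notation dist2 k := (pairing (y - k) (y - k)).

Lemma closed_nearest_point k0 : closed K -> K k0 ->
  exists2 p, K p & forall k, K k -> dist2 p <= dist2 k.
Proof.
move=> Kcl Kk0.
have dist2_cont : continuous (fun k : 'rV[R]_n => dist2 k).
  move=> k; apply: (@continuous_comp _ _ _ (fun k : 'rV[R]_n => y - k)
    (fun v => pairing v v)); last exact: pairing_self_continuous.
  by apply: (continuousB (f := cst y) (g := id)); [exact: cst_continuous | exact: id].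
pose A := K `&` [set k | dist2 k <= dist2 k0].
pose box i := `[- (`|y 0 i| + 1 + dist2 k0), `|y 0 i| + 1 + dist2 k0]%classic.
have A_box : A `<=` [set v | forall i, box i (v ord0 i)].
  move=> k [_ near_k] i; rewrite /box /= in_itv /= -ler_norml.
  have := coord_le_pairing (y - k) i; rewrite !mxE.
  have := ler_normB (y 0 i) (y 0 i - k 0 i).
  rewrite opprB subrKC /= in near_k *.
  lra.
have A_compact : compact A.
  apply: subclosed_compact _ _ A_box.
    apply: closedI => //.
    by have := preimage_closed (fun k _ => dist2_cont k) (@closed_le _ (dist2 k0)).
  by apply: rV_compact => i; exact: segment_compact.
have [p /set_mem [Kp _] p_min] : exists2 p, p \in A & forall k, k \in A -> dist2 p <= dist2 k.
  apply: compact_EVT_min A_compact _; first by exists k0; split => //=.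
  exact: continuous_subspaceT.
exists p => // k Kk; have [near_k|far_k] := lerP (dist2 k) (dist2 k0).
  by apply/p_min/mem_set.
have p_le_k0 : dist2 p <= dist2 k0 by apply/p_min/mem_set; split => //=.
exact: le_trans p_le_k0 (ltW far_k).
Qed.

Lemma nearest_point_cone p : convex_cone K -> K p ->
    (forall k, K k -> dist2 p <= dist2 k) ->
  (forall k, K k -> pairing (y - p) k <= 0) /\ 0 <= pairing (y - p) p.
Proof.
move=> [_ [KD KZ]] Kp p_min; split.
- move=> k Kk; apply: (@ler0_of_quadratic_bound _ _ (pairing k k)) => t t0 t1.
  have := p_min _ (KD _ _ Kp (KZ t k (ltW t0) Kk)).
  rewrite (_ : y - (p + t *: k) = (y - p) + (- t) *: k); last first.
    by rewrite scaleNr opprD addrA.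
  rewrite pairing_expand sqrrN; lra.
- rewrite -oppr_le0 -pairingNl.
  apply: (@ler0_of_quadratic_bound _ _ (pairing p p)) => t t0 t1.
  have := p_min _ (KZ (1 - t) p _ Kp); rewrite subr_ge0 (ltW t1) => /(_ isT).
  rewrite (_ : y - (1 - t) *: p = (y - p) + t *: p); last first.
    by rewrite scalerBl scale1r opprB addrA addrAC.
  rewrite pairing_expand pairingNl; lra.
Qed.

End NearestPoint.

Lemma closed_cone_bidual (R : realType) (n : nat) (K : set 'rV[R]_n) :
  convex_cone K -> closed K -> dual_cone (dual_cone K) `<=` K.
Proof.
move=> Kcc Kcl y y_bidual; apply: contrapT => Ky.
have [p Kp p_min] := closed_nearest_point y Kcl Kcc.1.
have [d_dual d_p] := nearest_point_cone Kcc Kp p_min.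
have d_neq0 : y - p != 0 by apply: contra_not_neq Ky => /eqP; rewrite subr_eq0 => /eqP ->.
have d_pos : 0 < pairing (y - p) (y - p).
  by rewrite lt_neqAle pairing_self_ge0 andbT eq_sym; apply: contra d_neq0 => /eqP/pairing_self_eq0 ->.
have sep_dual : dual_cone K (p - y).
  by move=> k Kk; rewrite -opprB pairingNl oppr_ge0 d_dual.
have := y_bidual _ sep_dual; rewrite -opprB pairingC pairingNl.
have : pairing (y - p) y = pairing (y - p) (y - p) + pairing (y - p) p.
  by rewrite -pairingDr subrK.
lra.
Qed.

Section Pad.
Variable T : Type.

(* [pad lo hi x] is the sequence lo, x 0, ..., x (k - 1), hi, hi, ... *)
Definition pad (lo hi : T) k (x : 'I_k -> T) (j : nat) : T :=
  if j is j'.+1 then (if insub j' is Some i then x i else hi) else lo.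

Lemma padS (lo hi : T) k (x : 'I_k -> T) (i : 'I_k) : pad lo hi x i.+1 = x i.
Proof. by rewrite /= valK. Qed.

Lemma pad_last (lo hi : T) k (x : 'I_k -> T) : pad lo hi x k.+1 = hi.
Proof. by rewrite /= insubF ?ltnn. Qed.

Lemma pad_restrict (Z : nat -> T) k j : (j <= k.+1)%N ->
  pad (Z 0%N) (Z k.+1) (fun i : 'I_k => Z i.+1) j = Z j.
Proof.
case: j => //= j jk; case: insubP => [i _ -> //|].
by rewrite -leqNgt => kj; have -> : j = k by lia.
Qed.

End Pad.

Lemma pad_map (T T' : Type) (f : T -> T') (lo hi : T) k (x : 'I_k -> T) j :
  f (pad lo hi x j) = pad (f lo) (f hi) (f \o x) j.
Proof. by case: j => //= j; case: insub. Qed.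

Section ConeChains.
Variables (V : zmodType) (K : set V).
Hypotheses (K0 : K 0) (KD : forall x y, K x -> K y -> K (x + y)).
Local Notation le x y := (K (y - x)).

Lemma cone_sum (I : Type) (r : seq I) (P : pred I) (F : I -> V) :
  (forall i, P i -> K (F i)) -> K (\sum_(i <- r | P i) F i).
Proof. by move=> KF; apply: big_ind => // i /KF. Qed.

Lemma cone_le_refl x : le x x.
Proof. by rewrite subrr. Qed.

Lemma cone_le_psum (e : nat -> V) i j : (forall l, K (e l)) -> (i <= j)%N ->
  le (\sum_(0 <= l < i) e l) (\sum_(0 <= l < j) e l).
Proof.
move=> Ke ij; rewrite (big_cat_nat (leq0n i) ij) /= addrC addrK.
exact: cone_sum.
Qed.

Definition ord_ext k (e : 'I_k -> V) (i : nat) : V :=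
  if insub i is Some o then e o else 0.

Lemma ord_ext_ord k (e : 'I_k -> V) (i : 'I_k) : ord_ext e i = e i.
Proof. by rewrite /ord_ext valK. Qed.

Lemma cone_ord_ext k (e : 'I_k -> V) i : (forall o, K (e o)) -> K (ord_ext e i).
Proof. by move=> Ke; rewrite /ord_ext; case: insub. Qed.

Lemma sum_ord_ext k (e : 'I_k -> V) :
  \sum_(i < k) e i = \sum_(0 <= i < k) ord_ext e i.
Proof. by rewrite big_mkord; apply: eq_bigr => i _; rewrite ord_ext_ord. Qed.

Lemma pad_mono (lo hi : V) k (x : 'I_k -> V) :
  le lo hi -> (forall i, le lo (x i)) -> (forall i, le (x i) hi) ->
  (forall i j : 'I_k, (i <= j)%N -> le (x i) (x j)) ->
  forall i j, (i <= j)%N -> le (pad lo hi x i) (pad lo hi x j).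
Proof.
move=> lo_hi lo_x x_hi x_mono [|i] [|j] //= ij; first exact: cone_le_refl.
  by case: insubP.
case: insubP => [j' _ vj|_]; case: insubP => [i' _ vi|ik] //.
- by apply: x_mono; rewrite vi vj.
- by have := valP j'; rewrite vj; move: ik; rewrite -leqNgt; lia.
- exact: cone_le_refl.
Qed.

End ConeChains.

Lemma omega_hat_dual_cone (R : realType) (n m : nat) (Apos : set 'rV[R]_n)
    (Bpos : set 'rV[R]_m) (W : 'M[R]_(n, m)) :
  convex_cone Bpos -> closed Bpos -> in_max_tensor Apos Bpos W ->
  forall a, dual_cone Apos a -> Bpos (omega_hat W a).
Proof.
move=> Bcc Bcl W_pos a a_dual; apply: closed_cone_bidual => // f f_dual.
exact: W_pos.
Qed.

Lemma marginalB_neq0 (R : realType) (n m : nat) (uA : 'rV[R]_n) (uB : 'rV[R]_m)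
    (W : 'M[R]_(n, m)) :
  bform W uA uB = 1 -> marginalB W uA != 0.
Proof.
move=> W_norm; apply/eqP => wB0; move: W_norm.
rewrite /bform -/(omega_hat W uA) -/(marginalB W uA) wB0 mul0mx mxE => /eqP.
by rewrite eq_sym oner_eq0.
Qed.

Definition lifts_chains (X Y : Type) (SX : set X) (leX : X -> X -> Prop)
    (SY : set Y) (leY : Y -> Y -> Prop) (p : X -> Y) : Prop :=
  forall (k : nat) (y : 'I_k -> Y),
    (forall i, SY (y i)) ->
    (forall (i j : 'I_k), (i <= j)%N -> leY (y i) (y j)) ->
  exists x : 'I_k -> X, [/\ forall i, SX (x i),
    (forall (i j : 'I_k), (i <= j)%N -> leX (x i) (x j))
    & forall i, p (x i) = y i].

Lemma lifts_chains_surjective (X Y : Type) (SX : set X) (leX : X -> X -> Prop)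
    (SY : set Y) (leY : Y -> Y -> Prop) (p : X -> Y) :
  (forall y, leY y y) -> lifts_chains SX leX SY leY p ->
  forall y, SY y -> exists2 x, SX x & p x = y.
Proof.
move=> leY_refl lift y SYy.
have [x [SXx _ pxy]] := lift 1%N (fun=> y) (fun=> SYy) (fun _ _ _ => leY_refl y).
by exists (x ord0).
Qed.

Section Steering.
Variables (R : realType) (n m : nat) (Apos : set 'rV[R]_n) (uA : 'rV[R]_n)
  (Bpos : set 'rV[R]_m) (W : 'M[R]_(n, m)).
Hypotheses (Bcc : convex_cone Bpos) (uA_dual : dual_cone Apos uA)
  (omega_pos : forall a, dual_cone Apos a -> Bpos (omega_hat W a)).

Local Notation wB := (marginalB W uA).
Local Notation effect := (effects Apos uA).
Local Notation leA := (ord_le (dual_cone Apos)).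
Local Notation leB := (ord_le Bpos).

Let A0 : dual_cone Apos 0 := (dual_cone_convex Apos).1.
Let AD : forall a a', dual_cone Apos a -> dual_cone Apos a' -> dual_cone Apos (a + a') :=
  (dual_cone_convex Apos).2.1.
Let B0 : Bpos 0 := Bcc.1.
Let BD : forall b b', Bpos b -> Bpos b' -> Bpos (b + b') := Bcc.2.1.

Lemma omega_hat0 : omega_hat W 0 = 0.
Proof. exact: mul0mx. Qed.

Lemma omega_hatB a a' : omega_hat W (a - a') = omega_hat W a - omega_hat W a'.
Proof. exact: mulmxBl. Qed.

Lemma omega_hat_monotone a a' : leA a a' -> leB (omega_hat W a) (omega_hat W a').
Proof. by rewrite /ord_le -omega_hatB; exact: omega_pos. Qed.

Lemma omega_hat_effect a : effect a -> ord_interval Bpos 0 wB (omega_hat W a).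
Proof.
by move=> [a_ge0 a_le]; split; rewrite -?omega_hat0; apply: omega_hat_monotone.
Qed.

Lemma steering_lifts_chains : steering Apos uA Bpos W ->
  lifts_chains effect leA (ord_interval Bpos 0 wB) leB (omega_hat W).
Proof.
move=> steer k y y_range y_mono.
pose Z := pad 0 wB y.
have Z_mono : forall i j, (i <= j)%N -> leB (Z i) (Z j).
  apply: pad_mono => //; first by rewrite /ord_le subr0; exact: omega_pos.
  - by move=> i; have [] := y_range i.
  - by move=> i; have [] := y_range i.
pose b (i : 'I_k.+1) := Z i.+1 - Z i.
have b_ens : ensemble Bpos wB b.
  split=> [i|]; first exact: Z_mono.
  rewrite -(big_mkord xpredT (fun i => Z i.+1 - Z i)) telescope_sumr //.
  by rewrite /Z pad_last subr0.
have [e [[e_eff e_sum] e_b]] := steer _ _ b_ens.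
have e_dual i : dual_cone Apos (ord_ext e i).
  by apply: (cone_ord_ext A0) => o; have [] := e_eff o; rewrite /ord_le subr0.
exists (fun j => \sum_(0 <= i < j.+1) ord_ext e i); split.
- move=> j; split; first by rewrite /ord_le subr0; apply: (cone_sum A0 AD) => i _.
  rewrite -[X in ord_le _ _ X]e_sum sum_ord_ext.
  exact: (@cone_le_psum _ _ A0 AD _ j.+1 k.+1 e_dual (ltnW (ltn_ord j))).
- by move=> i j ij; apply: (cone_le_psum A0 AD e_dual).
- move=> j; rewrite /omega_hat mulmx_suml.
  rewrite (@eq_big_nat _ _ _ _ _ _ (fun i => Z i.+1 - Z i)).
    by rewrite telescope_sumr // /Z padS subr0.
  move=> i /andP [_ ij]; have ik : (i < k.+1)%N by have := ltn_ord j; lia.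
  by rewrite -[i]/(nat_of_ord (Ordinal ik)) ord_ext_ord; exact: e_b.
Qed.

Lemma lifts_chains_steering : wB != 0 ->
  lifts_chains effect leA (ord_interval Bpos 0 wB) leB (omega_hat W) ->
  steering Apos uA Bpos W.
Proof.
move=> wB_neq0 lift [|k] b [b_pos b_sum].
  by move: wB_neq0; rewrite -b_sum big_ord0 eqxx.
pose S j := \sum_(0 <= i < j) ord_ext b i.
have b_ext_pos i : Bpos (ord_ext b i) by exact: cone_ord_ext.
have S_mono i j : (i <= j)%N -> leB (S i) (S j) by exact: cone_le_psum.
have S0 : S 0%N = 0 by rewrite /S big_geq.
have S_last : S k.+1 = wB by rewrite /S -sum_ord_ext.
have [x [x_eff x_mono x_S]] : exists x : 'I_k -> 'rV[R]_n, [/\ forall i, effect (x i),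
    forall i j : 'I_k, (i <= j)%N -> leA (x i) (x j)
    & forall i, omega_hat W (x i) = S i.+1].
  apply: lift => [i|i j ij]; last exact: S_mono.
  by rewrite -S0 -S_last; split; apply: S_mono => //; exact: ltnW (ltn_ord i).
pose X := pad 0 uA x.
have X_mono : forall i j, (i <= j)%N -> leA (X i) (X j).
  apply: (pad_mono A0) => //; first by rewrite /ord_le subr0.
  - by move=> i; have [] := x_eff i.
  - by move=> i; have [] := x_eff i.
have X_S j : (j <= k.+1)%N -> omega_hat W (X j) = S j.
  move=> jk; rewrite /X pad_map omega_hat0 -[omega_hat W uA]/wB -(pad_restrict S jk) S0 S_last.
  by congr pad; apply/funext => i /=; rewrite x_S.
exists (fun i => X i.+1 - X i); split; first split.
- move=> i; split; first by rewrite /ord_le subr0; exact: X_mono.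
  rewrite /ord_le (_ : uA - _ = (X k.+1 - X i.+1) + (X i - X 0%N)).
    by apply: AD; apply: X_mono => //; exact: ltn_ord.
  by rewrite /X pad_last subr0 opprB addrCA addrC.
- rewrite -(big_mkord xpredT (fun i => X i.+1 - X i)) telescope_sumr //.
  by rewrite /X pad_last subr0.
- move=> i; have ik := ltn_ord i.
  rewrite omega_hatB !X_S; try lia.
  by rewrite /S big_nat_recr //= addrAC subrr add0r ord_ext_ord.
Qed.

End Steering.

Theorem theorem5p4 (R : realType) (n m : nat)
  (Apos : set 'rV[R]_n) (uA : 'rV[R]_n) (Bpos : set 'rV[R]_m) (uB : 'rV[R]_m)
  (W : 'M[R]_(n, m)) :
  abstract_state_space Apos uA -> abstract_state_space Bpos uB ->
  bipartite_state Apos uA Bpos uB W ->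
  steering Apos uA Bpos W <->
  strong_quotient_map (effects Apos uA) (ord_le (dual_cone Apos))
    (ord_interval Bpos 0 (marginalB W uA)) (ord_le Bpos) (omega_hat W).
Proof.
move=> [_ _ _ _ /interior_subset uA_dual] [Bcc Bcl _ _ _] [W_pos W_norm].
have omega_pos := omega_hat_dual_cone Bcc Bcl W_pos.
split=> [steer | [_ _ _ lift]].
- have lift := steering_lifts_chains Bcc uA_dual omega_pos steer.
  split.
  + by move=> a; apply: omega_hat_effect.
  + by move=> a a' _ _; apply: omega_hat_monotone.
  + exact: lifts_chains_surjective (cone_le_refl Bcc.1) lift.
  + exact: lift.
- exact: lifts_chains_steering Bcc uA_dual (marginalB_neq0 W_norm) lift.
Qed.
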